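(* Let $G$ be a cop-win graph of corner rank $\alpha$. Every vertex of corner rank $k>1$ has at least one neighbor of corner rank $k-1$. In particular, if for some $k<\alpha$ there is exactly one vertex $v$ of corner rank $k$, then $v$ is adjacent to every vertex of corner rank $k+1$.
   Context: All graphs are finite, nonempty, and reflexive (every vertex has a loop). $N[v]$ is the closed neighborhood of $v$ (including $v$). For distinct $v,w$, $w$ strictly corners $v$ if $N[v]\subsetneq N[w]$; $v$ is then a strict corner. Corner ranking: set $G^{(1)}=G$, $k=1$. If $G^{(k)}$ is a clique, give all its vertices rank $k$ and stop. Else if $G^{(k)}$ has no strict corners, give all its vertices rank $\infty$ and stop. Else give every strict corner of $G^{(k)}$ rank $k$, delete them to get $G^{(k+1)}$ (induced subgraph), increase $k$ and repeat. The corner rank of $G$ is the largest rank of a vertex; cop-win graphs are exactly those of finite corner rank. Standing assumption: $\alpha\ge 2$. *)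

From mathcomp Require Import all_boot.
Set Implicit Arguments. Unset Strict Implicit. Unset Printing Implicit Defensive.

(* A finite reflexive graph: vertex type T : finType, adjacency e : rel T,
   assumed reflexive and symmetric (hypotheses of the theorem). *)
Section CornerRank.
Variables (T : finType) (e : rel T).

Definition nbhd (S : {set T}) (v : T) : {set T} := [set u in S | e v u].

Definition is_clique (S : {set T}) : bool :=
  [forall x in S, forall y in S, e x y].

Definition strict_corner (S : {set T}) (v : T) : bool :=
  (v \in S) && [exists w in S, (w != v) && (nbhd S v \proper nbhd S w)].

Definition corners (S : {set T}) : {set T} := [set v | strict_corner S v].

(* If there are no strict corners the set is unchanged forever, so its
   vertices are never removed (rank infinity). *)
Definition rank_step (S : {set T}) : {set T} :=
  if is_clique S then set0 else S :\: corners S.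

(* G^(k+1) (the graph at round k+1, as a vertex set) *)
Definition stage (k : nat) : {set T} := iter k rank_step setT.

Definition has_rank (v : T) (k : nat) : Prop :=
  0 < k /\ v \in stage k.-1 /\ v \notin stage k.

Definition cop_win : Prop := forall v, exists k, has_rank v k.

Definition corner_rank_of_graph (alpha : nat) : Prop :=
  (exists v, has_rank v alpha) /\ (forall v k, has_rank v k -> k <= alpha).

End CornerRank.

From mathcomp Require Import all_boot.
Set Implicit Arguments.
Unset Strict Implicit.
Unset Printing Implicit Defensive.

(* Suppose v survives the round G^(k) -> G^(k+1) but is removed at the next
   round, and v has no neighbour among the vertices removed at round k.  Then
   the neighbourhood of v is the same in G^(k) and in G^(k+1).  If v is a strict
   corner of G^(k+1), the vertex cornering it there also corners it in G^(k).
   If instead G^(k+1) is a clique, then a vertex m of G^(k) with a maximal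
   neighbourhood above that of a removed corner u survives, sees all of the
   clique G^(k+1) and also u, so it corners v in G^(k).  Either way v would
   have been removed at round k.  Symmetry of adjacency then gives the second
   claim: a vertex of rank k+1 has a neighbour of rank k, necessarily v. *)

Section RankStep.
Variables (T : finType) (e : rel T).

Lemma nbhdS (S S' : {set T}) v : S' \subset S -> nbhd e S' v \subset nbhd e S v.
Proof.
by move=> sS'S; apply/subsetP => x /setIdP[xS' evx]; rewrite inE (subsetP sS'S).
Qed.

Lemma nbhd_subset_eq (S S' : {set T}) v : S' \subset S ->
  (forall x, x \in S -> x \notin S' -> ~~ e v x) -> nbhd e S v = nbhd e S' v.
Proof.
move=> sS'S far; apply/eqP; rewrite eqEsubset (nbhdS _ sS'S) andbT.
apply/subsetP => x /setIdP[xS evx]; rewrite inE evx andbT.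
by apply: contraTT evx; apply: far.
Qed.

Lemma proper_nbhd_strict_corner (S : {set T}) v w :
  v \in S -> w \in S -> nbhd e S v \proper nbhd e S w -> strict_corner e S v.
Proof.
move=> vS wS vw; rewrite /strict_corner vS; apply/exists_inP; exists w => //.
by rewrite vw andbT; apply: contraTneq vw => ->; rewrite properxx.
Qed.

Lemma rank_stepE (S : {set T}) : ~~ is_clique e S -> rank_step e S = S :\: corners e S.
Proof. by rewrite /rank_step => /negbTE ->. Qed.

Lemma noncorner_dominates (S : {set T}) u : u \in S ->
  exists2 m, m \in S :\: corners e S & nbhd e S u \subset nbhd e S m.
Proof.
move=> uS; pose P m := (m \in S) && (nbhd e S u \subset nbhd e S m).
have Pu : P u by rewrite /P uS subxx.
case: (arg_maxnP (fun m => #|nbhd e S m|) Pu) => m /andP[mS um] maxm.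
exists m => //; rewrite in_setD mS andbT inE.
apply/negP => /andP[_ /exists_inP[w wS /andP[_ mw]]].
have /maxm : P w by rewrite /P wS (subset_trans um (proper_sub mw)).
by rewrite /= leqNgt proper_card.
Qed.

Hypothesis e_refl : reflexive e.

Lemma removed_next_has_removed_neighbour (S : {set T}) v :
  v \in rank_step e S -> v \notin rank_step e (rank_step e S) ->
  exists w, e v w /\ w \in S :\: rank_step e S.
Proof.
have [cS|ncS] := boolP (is_clique e S); first by rewrite /rank_step cS in_set0.
rewrite (rank_stepE ncS); set S' := S :\: corners e S => vS' vN.
have sS'S : S' \subset S by apply: subsetDl.
have [vnc vS] : v \notin corners e S /\ v \in S by apply/andP; rewrite -in_setD.
have [/exists_inP[w wS evw] | /exists_inPn far] := boolP [exists w in S :\: S', e v w].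
  by exists w.
have nvE : nbhd e S v = nbhd e S' v.
  by apply: nbhd_subset_eq => // x xS xS'; apply: far; rewrite in_setD xS xS'.
suff [w wS vw] : exists2 w, w \in S & nbhd e S v \proper nbhd e S w.
  by move: vnc; rewrite inE (proper_nbhd_strict_corner vS wS vw).
rewrite nvE; have [cS'|ncS'] := boolP (is_clique e S').
- have [u uS uS'] : exists2 u, u \in S & u \notin S'.
    apply/exists_inP; apply: contraNT ncS => /exists_inPn sSS'.
    have S'E : S' = S.
      by apply/eqP; rewrite eqEsubset sS'S; apply/subsetP => x /sSS'/negbNE.
    by rewrite -S'E cS'.
  have [m mS' um] := noncorner_dominates uS.
  have cl x y : x \in S' -> y \in S' -> e x y.
    by move=> xS' yS'; move/forall_inP: cS' => /(_ x xS') /forall_inP; apply.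
  exists m; first exact: (subsetP sS'S).
  apply/properP; split.
    by apply/subsetP => x /setIdP[xS' _]; rewrite inE (subsetP sS'S) // cl.
  by exists u; [apply: (subsetP um); rewrite inE uS e_refl | rewrite inE (negbTE uS')].
- move: vN; rewrite (rank_stepE ncS') in_setD vS' andbT inE negbK.
  case/andP=> _ /exists_inP[w wS' /andP[_ vw]].
  by exists w; [exact: (subsetP sS'S) | exact: proper_sub_trans vw (nbhdS _ sS'S)].
Qed.

Lemma has_rank_neighbour v k :
  has_rank e v k.+2 -> exists w, e v w /\ has_rank e w k.+1.
Proof.
case=> _ [vk vNk]; have [w [evw]] := removed_next_has_removed_neighbour vk vNk.
by rewrite in_setD => /andP[wNk wk]; exists w.
Qed.

End RankStep.

Theorem corollary3p17 (T : finType) (e : rel T) (alpha : nat)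
  (hne : 0 < #|T|) (hrefl : reflexive e) (hsym : symmetric e)
  (hcop : cop_win e) (halpha : corner_rank_of_graph e alpha)
  (halpha2 : 2 <= alpha) :
  (forall (v : T) (k : nat), has_rank e v k -> 1 < k ->
     exists w : T, e v w /\ has_rank e w k.-1) /\
  (forall (k : nat) (v : T), k < alpha -> has_rank e v k ->
     (forall u : T, has_rank e u k -> u = v) ->
     forall w : T, has_rank e w k.+1 -> e v w).
Proof.
have lower_neighbour v k : has_rank e v k -> 1 < k -> exists w, e v w /\ has_rank e w k.-1.
  by case: k => [|[|k]] // vk _; exact: has_rank_neighbour hrefl _ _ vk.
split=> // k v _ [k_gt0 vk] v_unique w wk1.
have [u [ewu uk]] := lower_neighbour w k.+1 wk1 k_gt0.
by rewrite -(v_unique u uk) hsym.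
Qed.
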